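(* Let $\boldsymbol{A},\boldsymbol{B}\in\mathsf{PSL}$ and let $\mathbb{X},\mathbb{Y}$ be posets. (i) If $f\colon\boldsymbol{A}\to\boldsymbol{B}$ is a homomorphism, then $f_\ast\colon\boldsymbol{B}_\ast\rightharpoonup\boldsymbol{A}_\ast$ is a partial negative p-morphism. (ii) If $p\colon\mathbb{X}\rightharpoonup\mathbb{Y}$ is a partial negative p-morphism, then $\mathsf{Up}_{\mathsf{PSL}}(p)\colon\mathsf{Up}_{\mathsf{PSL}}(\mathbb{Y})\to\mathsf{Up}_{\mathsf{PSL}}(\mathbb{X})$ is a homomorphism.
   Context: $\mathsf{PSL}$ is the class of pseudocomplemented semilattices $\langle A;\land,\lnot,0,1\rangle$: $\langle A;\land\rangle$ is a semilattice (order $a\le b$ iff $a\land b=a$) with minimum $0$ and maximum $1$, and $c\land a=0\iff c\le\lnot a$ for all $a,c$. A filter of $\boldsymbol{A}$ is a nonempty upset closed under $\land$; it is meet irreducible if proper and not the intersection of two filters both different from it; $\boldsymbol{A}_\ast$ is the poset of meet irreducible filters under inclusion. A partial function $p\colon X\rightharpoonup Y$ is a function from $\mathsf{dom}(p)\subseteq X$ to $Y$; between posets it is order preserving if $x\le z$ in $\mathsf{dom}(p)$ implies $p(x)\le p(z)$. An order preserving $p\colon\mathbb{X}\rightharpoonup\mathbb{Y}$ is a partial negative p-morphism if $X={\downarrow}\{x\in X:{\uparrow}x\subseteq\mathsf{dom}(p)\}$ and whenever $x\in\mathsf{dom}(p)$, $y\in Y$, $p(x)\le y$, there is $z\in\mathsf{dom}(p)$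 with $x\le z$ and $y\le p(z)$. For a homomorphism $f$, $f_\ast$ has domain $\{F\in\boldsymbol{B}_\ast: f^{-1}[F]\in\boldsymbol{A}_\ast\}$ and $f_\ast(F)=f^{-1}[F]$. For a poset $\mathbb{X}$, $\mathsf{Up}_{\mathsf{PSL}}(\mathbb{X})=\langle\mathsf{Up}(\mathbb{X});\cap,\lnot,\emptyset,X\rangle$ where $\mathsf{Up}(\mathbb{X})$ is the set of upsets and $\lnot U = X\smallsetminus{\downarrow}U$; and $\mathsf{Up}_{\mathsf{PSL}}(p)(U)=X\smallsetminus{\downarrow}p^{-1}[Y\smallsetminus U]$. *)

From Stdlib Require Import FunctionalExtensionality PropExtensionality ProofIrrelevance.
Set Implicit Arguments.

Record PSL := {
  car :> Type;
  meet : car -> car -> car;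
  neg : car -> car;
  zero : car;
  one : car;
  meetA : forall a b c, meet a (meet b c) = meet (meet a b) c;
  meetC : forall a b, meet a b = meet b a;
  meetI : forall a, meet a a = a;
  meet0 : forall a, meet zero a = zero;
  meet1 : forall a, meet a one = a;
  negP : forall a c, meet c a = zero <-> meet c (neg a) = c
}.
Arguments meet {p}. Arguments neg {p}. Arguments zero {p}. Arguments one {p}.

Definition PSL_le (A : PSL) (a b : A) : Prop := meet a b = a.

Definition PSL_hom (A B : PSL) (f : A -> B) : Prop :=
  (forall a b : A, f (meet a b) = meet (f a) (f b)) /\
  (forall a : A, f (neg a) = neg (f a)) /\
  f zero = zero /\ f one = one.

Definition set_eq {T : Type} (S S' : T -> Prop) : Prop := forall x, S x <-> S' x.

Definition is_filter (A : PSL) (F : A -> Prop) : Prop :=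
  (exists a, F a) /\
  (forall a b : A, F a -> PSL_le A a b -> F b) /\
  (forall a b : A, F a -> F b -> F (meet a b)).

Definition meet_irreducible (A : PSL) (F : A -> Prop) : Prop :=
  is_filter A F /\ (exists a, ~ F a) /\
  ~ (exists G H : A -> Prop, is_filter A G /\ is_filter A H /\
       ~ set_eq G F /\ ~ set_eq H F /\ set_eq F (fun x => G x /\ H x)).

Definition MIF (A : PSL) : Type := { F : A -> Prop | meet_irreducible A F }.
Definition MIF_le (A : PSL) (F G : MIF A) : Prop :=
  forall a, proj1_sig F a -> proj1_sig G a.

Arguments MIF_le : clear implicits.

Definition is_poset {X : Type} (le : X -> X -> Prop) : Prop :=
  (forall x, le x x) /\
  (forall x y, le x y -> le y x -> x = y) /\
  (forall x y z, le x y -> le y z -> le x z).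

Record pfun (X Y : Type) := {
  pdom : X -> Prop;
  papp : forall x, pdom x -> Y
}.

Definition order_preserving {X Y : Type} (leX : X -> X -> Prop) (leY : Y -> Y -> Prop)
  (p : pfun X Y) : Prop :=
  forall x z (hx : pdom p x) (hz : pdom p z), leX x z -> leY (papp p x hx) (papp p z hz).

Definition partial_neg_pmorphism {X Y : Type} (leX : X -> X -> Prop) (leY : Y -> Y -> Prop)
  (p : pfun X Y) : Prop :=
  order_preserving leX leY p /\
  (* X = downset of { x | upset of x is contained in dom p } *)
  (forall x, exists w, leX x w /\ (forall v, leX w v -> pdom p v)) /\
  (forall x (hx : pdom p x) (y : Y), leY (papp p x hx) y ->
     exists z (hz : pdom p z), leX x z /\ leY y (papp p z hz)).

Definition lower_star (A B : PSL) (f : A -> B) : pfun (MIF B) (MIF A) :=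
  {| pdom := fun F : MIF B => meet_irreducible A (fun a => proj1_sig F (f a));
     papp := fun F h => exist _ (fun a => proj1_sig F (f a)) h |}.

Definition is_upset {X : Type} (le : X -> X -> Prop) (U : X -> Prop) : Prop :=
  forall x y, U x -> le x y -> U y.
Definition Up {X : Type} (le : X -> X -> Prop) : Type := { U : X -> Prop | is_upset le U }.

Lemma Up_ext {X : Type} (le : X -> X -> Prop) (U V : Up le) :
  (forall x, proj1_sig U x <-> proj1_sig V x) -> U = V.
Proof.
  destruct U as [U hU], V as [V hV]; simpl; intro E.
  assert (U = V) by (apply functional_extensionality; intro x; apply propositional_extensionality; apply E).
  subst V. f_equal. apply proof_irrelevance.
Qed.

Section UpPSL.
Context {X : Type} (le : X -> X -> Prop) (H : is_poset le).

Definition up_meet (U V : Up le) : Up le.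
Proof.
  refine (exist _ (fun x => proj1_sig U x /\ proj1_sig V x) _).
  intros x y [a b] l; split; [exact (proj2_sig U x y a l) | exact (proj2_sig V x y b l)].
Defined.

Definition up_neg (U : Up le) : Up le.
Proof.
  refine (exist _ (fun x => ~ exists y, le x y /\ proj1_sig U y) _).
  intros x y nx lxy [z [lyz Uz]]. apply nx. exists z. split; [|exact Uz].
  destruct H as [_ [_ T]]. exact (T _ _ _ lxy lyz).
Defined.

Definition up_zero : Up le := exist (is_upset le) (fun _ => False) (fun _ _ f _ => f).
Definition up_one : Up le := exist (is_upset le) (fun _ => True) (fun _ _ _ _ => I).

Definition UpPSL : PSL.
Proof.
  refine {| car := Up le; meet := up_meet; neg := up_neg; zero := up_zero; one := up_one |}.
  - intros; apply Up_ext; simpl; tauto.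
  - intros; apply Up_ext; simpl; tauto.
  - intros; apply Up_ext; simpl; tauto.
  - intros; apply Up_ext; simpl; tauto.
  - intros; apply Up_ext; simpl; tauto.
  - intros a c; split.
    + intro E. apply Up_ext; simpl. intro x; split; [tauto|].
      intro cx; split; [exact cx|]. intros [y [lxy ay]].
      assert (Hy : proj1_sig (up_meet c a) y) by (split; [exact (proj2_sig c x y cx lxy) | exact ay]).
      rewrite E in Hy. exact Hy.
    + intro E. apply Up_ext; simpl. intro x; split; [|tauto].
      intros [cx ax]. rewrite <- E in cx. destruct cx as [_ n]. apply n.
      exists x. split; [exact (proj1 H x) | exact ax].
Defined.
End UpPSL.

Definition up_map {X Y : Type} (leX : X -> X -> Prop) (leY : Y -> Y -> Prop)
  (HX : is_poset leX) (p : pfun X Y) (U : Up leY) : Up leX.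
Proof.
  refine (exist _ (fun x => ~ exists z (hz : pdom p z), leX x z /\ ~ proj1_sig U (papp p z hz)) _).
  intros x y nx lxy [z [hz [lyz nU]]]. apply nx. exists z, hz. split; [|exact nU].
  destruct HX as [_ [_ T]]. exact (T _ _ _ lxy lyz).
Defined.

From Stdlib Require Import Classical.
From mathcomp Require Import ssreflect classical_sets.

(* (i) Maximal proper filters (ultrafilters) of a PSL are meet irreducible and contain [a] or
   [neg a] for every [a]; hence preimages of ultrafilters under homomorphisms are ultrafilters.
   By Zorn every proper filter extends to an ultrafilter, and an ultrafilter is maximal in
   [B_*], which gives the downset condition for [f_*]. For the back condition, if
   [f^-1[F] ⊆ G] then the filter generated by [F ∪ f[G]] is proper, since [b ∧ f a = 0] would
   put [f (neg a)] in [F] and so [neg a] in [G]; any ultrafilter [W] above it satisfies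
   [F ⊆ W] and [G ⊆ f^-1[W]].
   (ii) [Up(p)] preserves [∩], [∅] and [X] by unfolding. Preservation of [¬] uses monotonicity
   and the back condition in one direction and, in the other, only that every point lies below
   a point of [dom p]. *)

Local Open Scope classical_set_scope.

Section Order.
Context {A : PSL}.
Implicit Types a b c d : A.

Lemma le_refl a : PSL_le A a a.
Proof. exact: meetI. Qed.

Lemma le_trans {a b c} : PSL_le A a b -> PSL_le A b c -> PSL_le A a c.
Proof. by rewrite /PSL_le => ab bc; rewrite -ab -meetA bc. Qed.

Lemma le_meetl a b : PSL_le A (meet a b) a.
Proof. by rewrite /PSL_le meetC meetA meetI. Qed.

Lemma le_meetr a b : PSL_le A (meet a b) b.
Proof. by rewrite /PSL_le -meetA meetI. Qed.

Lemma le_meetI {c a b} : PSL_le A c a -> PSL_le A c b -> PSL_le A c (meet a b).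
Proof. by rewrite /PSL_le => ca cb; rewrite meetA ca cb. Qed.

Lemma le_meet2 {a b c d} : PSL_le A a c -> PSL_le A b d -> PSL_le A (meet a b) (meet c d).
Proof.
move=> ac bd; apply: le_meetI.
- exact: le_trans (le_meetl _ _) ac.
- exact: le_trans (le_meetr _ _) bd.
Qed.

Lemma le0x a : PSL_le A zero a.
Proof. exact: meet0. Qed.

Lemma lex1 a : PSL_le A a one.
Proof. exact: meet1. Qed.

Lemma lex0 {a} : PSL_le A a zero -> a = zero.
Proof. by rewrite /PSL_le => a0; rewrite -a0 meetC meet0. Qed.

Lemma meet_neg a : meet a (neg a) = zero.
Proof. by rewrite meetC; apply/negP; apply: meetI. Qed.

Lemma neg_antitone {a b} : PSL_le A a b -> PSL_le A (neg b) (neg a).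
Proof.
move=> ab; apply/negP/lex0.
apply: le_trans (le_meet2 (le_refl _) ab) _.
by rewrite meetC meet_neg; apply: le_refl.
Qed.

End Order.

Section Filters.
Context {A : PSL}.
Implicit Types (a x y : A) (F G W : set A).

Definition proper_filter F := is_filter A F /\ ~ F zero.

Definition maximal_filter W :=
  proper_filter W /\ forall G, proper_filter G -> W `<=` G -> G `<=` W.

Lemma principal_filter a : is_filter A (PSL_le A a).
Proof.
split; [by exists a; apply: le_refl | split].
- by move=> x y ax xy; apply: le_trans xy.
- by move=> x y ax ay; apply: le_meetI.
Qed.

Lemma filter_one F : is_filter A F -> F one.
Proof. by case=> [[a Fa] [upF _]]; apply: upF Fa (lex1 a). Qed.

Lemma proper_filter_neg {F a} : proper_filter F -> F a -> F (neg a) -> False.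
Proof. by case=> [[_ [_ meetF]] F0] Fa Fna; apply: F0; rewrite -(meet_neg a); apply: meetF. Qed.

Lemma meet_irreducible_proper {F} : meet_irreducible A F -> proper_filter F.
Proof.
by case=> [[neF [upF meetF]] [[a Fna] _]]; split=> // F0; apply: Fna (upF _ _ F0 (le0x a)).
Qed.

Lemma maximal_meet_irreducible {W} : maximal_filter W -> meet_irreducible A W.
Proof.
case=> [[filW W0] maxW]; split=> //; split; first by exists zero.
case=> [G [H [filG [filH [neqG [neqH WGH]]]]]].
have G0 : G zero.
  apply: NNPP => G0; apply: neqG => x; split; last by move=> /WGH [].
  by apply: (maxW G) => // y /WGH [].
have H0 : H zero.
  apply: NNPP => H0; apply: neqH => x; split; last by move=> /WGH [].
  by apply: (maxW H) => // y /WGH [].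
by apply: W0; apply/WGH.
Qed.

Lemma maximal_filter_above {W G} : maximal_filter W -> proper_filter G -> W `<=` G ->
  maximal_filter G.
Proof.
move=> [_ maxW] propG WG; split=> // H propH GH x Hx.
by apply/WG/(maxW H propH) => // y /WG/GH.
Qed.

Definition filter_join F G : set A :=
  fun c => exists x y, F x /\ G y /\ PSL_le A (meet x y) c.

Lemma filter_join_filter {F G} : is_filter A F -> is_filter A G -> is_filter A (filter_join F G).
Proof.
move=> filF filG; have [_ [_ meetF]] := filF; have [_ [_ meetG]] := filG.
split; [|split].
- by exists one, one, one; do !split; [exact: filter_one | exact: filter_one | exact: lex1].
- by move=> c d [x [y [Fx [Gy xyc]]]] cd; exists x, y; do !split=> //; apply: le_trans cd.
- move=> c d [x [y [Fx [Gy xyc]]]] [x' [y' [Fx' [Gy' xyd]]]].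
  exists (meet x x'), (meet y y'); do !split; [exact: meetF | exact: meetG |].
  apply: le_meetI; [apply: le_trans xyc | apply: le_trans xyd]; apply: le_meet2;
    [apply: le_meetl | apply: le_meetl | apply: le_meetr | apply: le_meetr].
Qed.

Lemma filter_join_subl {F G} : is_filter A G -> F `<=` filter_join F G.
Proof.
by move=> filG x Fx; exists x, one; rewrite meet1; do !split=> //;
  [exact: filter_one | exact: le_refl].
Qed.

Lemma filter_join_subr {F G} : is_filter A F -> G `<=` filter_join F G.
Proof.
by move=> filF y Gy; exists one, y; do !split=> //; [exact: filter_one | exact: le_meetr].
Qed.

Lemma filter_join_zero {F G} : filter_join F G zero -> exists x y, F x /\ G y /\ PSL_le A x (neg y).
Proof. by move=> [x [y [Fx [Gy /lex0 xy0]]]]; exists x, y; do !split=> //; apply/negP. Qed.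

Lemma maximal_filter_mem_or_neg {W} a : maximal_filter W -> W a \/ W (neg a).
Proof.
move=> [[filW W0] maxW]; have [_ [upW _]] := filW.
have filWa := filter_join_filter filW (principal_filter a).
have [Wa0|nWa0] := classic (filter_join W (PSL_le A a) zero).
- have [x [y [Wx [ay xny]]]] := filter_join_zero Wa0.
  by right; apply: upW Wx (le_trans xny (neg_antitone ay)).
- left; apply: (maxW _ (conj filWa nWa0)).
  + exact: filter_join_subl (principal_filter a).
  + exact: filter_join_subr filW _ (le_refl a).
Qed.

Lemma proper_filter_chain_union {G0} {C : set (set A)} :
  proper_filter G0 -> (forall S, C S -> proper_filter (G0 `|` S)) -> total_on C subset ->
  proper_filter (G0 `|` \bigcup_(S in C) S).
Proof.
move=> propG0 propC chainC; set U := G0 `|` _.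
have common x y : U x -> U y -> exists H, proper_filter H /\ H `<=` U /\ H x /\ H y.
  have inU S : C S -> (G0 `|` S) x -> (G0 `|` S) y ->
      exists H, proper_filter H /\ H `<=` U /\ H x /\ H y.
    move=> CS Sx Sy; exists (G0 `|` S); split; first exact: propC.
    by split=> // z [G0z|Sz]; [left | right; exists S].
  case=> [G0x|[S CS Sx]] [G0y|[T CT Ty]].
  - by exists G0; split=> //; split=> // z G0z; left.
  - by apply: (inU T) => //; [left | right].
  - by apply: (inU S) => //; [right | left].
  - have [ST|TS] := chainC S T CS CT.
    + by apply: (inU T) => //; right => //; apply: ST.
    + by apply: (inU S) => //; right => //; apply: TS.
have [[[g G0g] _] _] := propG0.
split; [split; [|split]|].
- by exists g; left.
- move=> x y Ux xy; have [H [[[_ [upH _]] _] [HU [Hx _]]]] := common x x Ux Ux.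
  by apply/HU/(upH x).
- move=> x y Ux Uy; have [H [[[_ [_ meetH]] _] [HU [Hx Hy]]]] := common x y Ux Uy.
  by apply/HU/meetH.
- by move=> U0; have [H [[_ nH0] [_ [H0 _]]]] := common _ _ U0 U0.
Qed.

Lemma exists_maximal_filter {G0} : proper_filter G0 -> exists W, maximal_filter W /\ G0 `<=` W.
Proof.
(* [Zorn_bigcup] needs the union of the empty chain to be admissible too, hence sets are taken
   modulo [G0]. *)
move=> propG0.
have [S [propS maxS]] := @Zorn_bigcup A (fun S => proper_filter (G0 `|` S))
  (fun C propC chainC => proper_filter_chain_union propG0 propC chainC).
exists (G0 `|` S); split; last by move=> x; left.
split=> // G propG sub x Gx.
have [GS|nGS] := classic (G `<=` S); first by right; apply: GS.
exfalso; apply: (maxS G); first by split=> // y Sy; apply: sub; right.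
by rewrite setUidr // => y G0y; apply: sub; left.
Qed.

End Filters.

Section Homomorphism.
Variables (A B : PSL) (f : A -> B).
Hypothesis hom_f : PSL_hom A B f.

Lemma hom_le a b : PSL_le A a b -> PSL_le B (f a) (f b).
Proof. by case: hom_f => fmeet _; rewrite /PSL_le => ab; rewrite -fmeet ab. Qed.

Lemma preimage_filter {G} : is_filter B G -> is_filter A (f @^-1` G).
Proof.
case: hom_f => fmeet [_ [_ f1]] filG; have [_ [upG meetG]] := filG.
split; [by exists one; rewrite /preimage /= f1; apply: filter_one | split].
- by move=> a b Gfa /hom_le; apply: upG.
- by move=> a b Gfa Gfb; rewrite /preimage /= fmeet; apply: meetG.
Qed.

Definition up_image (G : set A) : set B := fun b => exists a, G a /\ PSL_le B (f a) b.

Lemma up_image_filter {G} : is_filter A G -> is_filter B (up_image G).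
Proof.
case: hom_f => fmeet _ [[a Ga] [_ meetG]].
split; [by exists (f a), a; split=> //; apply: le_refl | split].
- by move=> b c [a' [Ga' fab]] bc; exists a'; split=> //; apply: le_trans bc.
- move=> b c [a' [Ga' fab]] [a'' [Ga'' fac]]; exists (meet a' a''); split; first exact: meetG.
  by rewrite fmeet; apply: le_meet2.
Qed.

Lemma preimage_maximal {W} : maximal_filter W -> maximal_filter (f @^-1` W).
Proof.
move=> maxW; have W_or_neg a := maximal_filter_mem_or_neg a maxW.
case: maxW => [[filW W0] _]; case: hom_f => _ [fneg [f0 _]].
split; first by split; [exact: preimage_filter | rewrite /preimage /= f0].
move=> G propG WG a Ga; case: (W_or_neg (f a)) => // Wnfa.
by case: (proper_filter_neg propG Ga); apply: WG; rewrite /preimage /= fneg.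
Qed.

Lemma lower_star_order_preserving :
  order_preserving (MIF_le B) (MIF_le A) (lower_star A B f).
Proof. by move=> F G domF domG FG a /FG. Qed.

Lemma lower_star_dom_cofinal (F : MIF B) :
  exists W, MIF_le B F W /\ forall V, MIF_le B W V -> pdom (lower_star A B f) V.
Proof.
case: F => F MIF.
have [W [maxW FW]] := exists_maximal_filter (meet_irreducible_proper MIF).
exists (exist _ W (maximal_meet_irreducible maxW)); split=> // -[V MIV] WV.
apply/maximal_meet_irreducible/preimage_maximal.
exact: maximal_filter_above maxW (meet_irreducible_proper MIV) WV.
Qed.

Lemma lower_star_back (F : MIF B) (domF : pdom (lower_star A B f) F) (G : MIF A) :
  MIF_le A (papp (lower_star A B f) F domF) G ->
  exists W (domW : pdom (lower_star A B f) W),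
    MIF_le B F W /\ MIF_le A G (papp (lower_star A B f) W domW).
Proof.
case: F domF G => F MIF domF [G MIG] /= FG.
have propG := meet_irreducible_proper MIG; have [filG _] := propG.
have [filF _] := meet_irreducible_proper MIF; have [_ [upF _]] := filF.
have filH := filter_join_filter filF (up_image_filter filG).
have propH : proper_filter (filter_join F (up_image G)).
  split=> // /filter_join_zero [b [y [Fb [[a [Ga fab]] bnb]]]].
  apply: (proper_filter_neg propG Ga); apply: FG => /=.
  case: hom_f => _ [-> _]; exact: upF Fb (le_trans bnb (neg_antitone fab)).
have [W [maxW HW]] := exists_maximal_filter propH.
exists (exist _ W (maximal_meet_irreducible maxW)),
  (maximal_meet_irreducible (preimage_maximal maxW)).
split=> a Ha /=; apply: HW.
- exact: filter_join_subl (up_image_filter filG) _ Ha.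
- by apply: filter_join_subr filF _ _; exists a; split=> //; apply: le_refl.
Qed.

Lemma lower_star_neg_pmorphism :
  partial_neg_pmorphism (MIF_le B) (MIF_le A) (lower_star A B f).
Proof.
split; [exact: lower_star_order_preserving | split; [exact: lower_star_dom_cofinal |]].
exact: lower_star_back.
Qed.

End Homomorphism.

Section UpMap.
Variables (X Y : Type) (leX : X -> X -> Prop) (leY : Y -> Y -> Prop).
Variables (HX : is_poset leX) (HY : is_poset leY) (p : pfun X Y).

Definition dom_cofinal := forall x, exists w (dw : pdom p w), leX x w.

Lemma up_map_meet (U V : Up leY) :
  up_map HX p (up_meet U V) = up_meet (up_map HX p U) (up_map HX p V).
Proof.
apply: Up_ext => x /=; split.
- by move=> nUV; split=> -[z [dz [xz nU]]]; apply: nUV; exists z, dz; split=> // -[].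
- move=> [nU nV] [z [dz [xz nUV]]]; apply: nUV.
  by split; apply: NNPP => nW; [apply: nU | apply: nV]; exists z, dz.
Qed.

Lemma up_map_neg (U : Up leY) :
  order_preserving leX leY p -> dom_cofinal ->
  (forall x (dx : pdom p x) y, leY (papp p x dx) y ->
     exists z (dz : pdom p z), leX x z /\ leY y (papp p z dz)) ->
  up_map HX p (up_neg HY U) = up_neg HX (up_map HX p U).
Proof.
have [reflX [_ transX]] := HX; have [reflY [_ transY]] := HY.
move=> monp cofinal back; apply: Up_ext => x /=; split.
- move=> nLHS [x' [xx' nx']]; have [w [dw x'w]] := cofinal x'.
  have Uw : proj1_sig U (papp p w dw) by apply: NNPP => nUw; apply: nx'; exists w, dw.
  apply: nLHS; exists w, dw; split; first exact: transX xx' x'w.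
  by apply; exists (papp p w dw); split; first exact: reflY.
- move=> nRHS [z [dz [xz nn]]]; apply: nn => -[y [pzy Uy]].
  have [z' [dz' [zz' yz']]] := back z dz y pzy.
  apply: nRHS; exists z'; split; first exact: transX xz zz'.
  move=> [z'' [dz'' [z'z'' nU]]]; apply: nU.
  exact: (proj2_sig U) Uy (transY _ _ _ yz' (monp _ _ _ _ z'z'')).
Qed.

Lemma up_map_zero : dom_cofinal -> up_map HX p (up_zero leY) = up_zero leX.
Proof.
move=> cofinal; apply: Up_ext => x /=; split=> [nx|[]].
by have [w [dw xw]] := cofinal x; apply: nx; exists w, dw; split=> // -[].
Qed.

Lemma up_map_one : up_map HX p (up_one leY) = up_one leX.
Proof. by apply: Up_ext => x /=; split=> // _ [z [dz [_ nT]]]; apply: nT. Qed.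

Lemma up_map_hom : partial_neg_pmorphism leX leY p ->
  PSL_hom (UpPSL HY) (UpPSL HX) (@up_map X Y leX leY HX p).
Proof.
have [reflX _] := HX.
move=> [monp [dn back]].
have cofinal : dom_cofinal by move=> x; have [w [xw dom]] := dn x; exists w, (dom w (reflX w)).
split; first exact: up_map_meet.
split; first by move=> U; exact: up_map_neg.
by split; [exact: up_map_zero | exact: up_map_one].
Qed.

End UpMap.

Theorem proposition3p9 :
  (forall (A B : PSL) (f : A -> B),
      PSL_hom A B f -> partial_neg_pmorphism (MIF_le B) (MIF_le A) (lower_star A B f)) /\
  (forall (X Y : Type) (leX : X -> X -> Prop) (leY : Y -> Y -> Prop)
          (HX : is_poset leX) (HY : is_poset leY) (p : pfun X Y),
      partial_neg_pmorphism leX leY p ->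
      PSL_hom (UpPSL HY) (UpPSL HX) (@up_map X Y leX leY HX p)).
Proof. by split=> *; [exact: lower_star_neg_pmorphism | exact: up_map_hom]. Qed.
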